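(* Let $\alpha\in(0,\tfrac12)$. For every sufficiently large $\nu$ (depending on $\alpha$), $$\mathbb P\big(D_{i_{\max},j}=0\ \text{for all } j=0,\dots,n_{i_{\max}}-1\big)=1-o(n^{-1/2})\quad\text{as } n\to\infty.$$
   Context: KPKVB setting: fix $\alpha>0$, $\nu>0$, an integer $n>\nu$, and $R=2\ln(n/\nu)$. $\mathcal D_R$ is the hyperbolic disk (curvature $-1$) of radius $R$ around the origin, with polar coordinates $(r,\theta)$, $r\in[0,R)$, $\theta\in(0,2\pi]$; $f_{\alpha,R}(r,\theta)=\frac{\alpha\sinh(\alpha r)}{2\pi(\cosh(\alpha R)-1)}$. $\mathcal P$ is a Poisson point process on $\mathcal D_R$ with intensity measure $n f_{\alpha,R}(r,\theta)\,dr\,d\theta$. Tiling: $i_{\max}=\lceil 0.9R/(2\ln 2)\rceil$, $n_i=2^{4-i+\lfloor R/(2\ln 2)\rfloor}$ for integers $0\le i\le i_{\max}$; $(i,j)$ is admissible if $0\le i\le i_{\max}$, $0\le j<n_i$; $T_{i,j}=\{(r,\theta)\in\mathcal D_R:\ R-2(i+1)\ln 2\le r<R-2i\ln 2,\ 2\pi j/n_i<\theta\le 2\pi(j+1)/n_i\}$. $N(T_{i,j})=|\mathcal P\cap T_{i,j}|$. Demands: $D_{0,j}=N(T_{0,j})$ if $N(T_{0,j})\in\{1,2\}$ and $D_{0,j}=0$ otherwise; for $0<i\le i_{\max}$, $D_{i,j}=\max\{D_{i-1,2j}+D_{i-1,2j+1}+3-N(T_{i,j}),0\}$. *)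

From Stdlib Require Import Reals Lra Lia ZArith Arith List Bool ClassicalEpsilon.
Open Scope R_scope.

Definition Rrad (nu : R) (n : nat) : R := 2 * ln (INR n / nu).

(* floor and ceiling via Stdlib's [up] (x < up x <= x + 1). *)
Definition floorZ (x : R) : Z := (up x - 1)%Z.
Definition ceilZ (x : R) : Z := (1 - up (- x))%Z.

Definition imax (nu : R) (n : nat) : nat :=
  Z.to_nat (ceilZ ((9 / 10) * Rrad nu n / (2 * ln 2))).

(* n_i = 2^(4 - i + floor (R / (2 ln 2))) (exponent is >= 2 for 0 <= i <= i_max) *)
Definition ntiles (nu : R) (n : nat) (i : nat) : nat :=
  (2 ^ Z.to_nat (4 - Z.of_nat i + floorZ (Rrad nu n / (2 * ln 2))))%nat.

(* radial range of tile row i, intersected with [0, R) *)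
Definition r_lo (nu : R) (n i : nat) : R := Rmax 0 (Rrad nu n - 2 * (INR i + 1) * ln 2).
Definition r_hi (nu : R) (n i : nat) : R := Rmax 0 (Rrad nu n - 2 * INR i * ln 2).

(* Expected number of points of P in T_{i,j}:
   n * (angular width 2 pi / n_i) * int_{r_lo}^{r_hi} f_{alpha,R}(r) dr, where
   int alpha sinh(alpha r) / (2 pi (cosh (alpha R) - 1)) dr
     = (cosh (alpha r_hi) - cosh (alpha r_lo)) / (2 pi (cosh (alpha R) - 1)). *)
Definition tile_mean (alpha nu : R) (n i : nat) : R :=
  INR n * (2 * PI / INR (ntiles nu n i)) *
  ((cosh (alpha * r_hi nu n i) - cosh (alpha * r_lo nu n i)) /
   (2 * PI * (cosh (alpha * Rrad nu n) - 1))).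

Definition poisson_pmf (mu : R) (k : nat) : R := exp (- mu) * mu ^ k / INR (fact k).

(* A configuration of tile counts: c i j = N(T_{i,j}). *)
Definition config := nat -> nat -> nat.

(* Demands D_{i,j} (truncated nat subtraction = max(.,0)). *)
Fixpoint demand (c : config) (i j : nat) : nat :=
  match i with
  | O => if (c O j =? 1)%nat || (c O j =? 2)%nat then c O j else O
  | S i' => (demand c i' (2 * j) + demand c i' (2 * j + 1) + 3 - c i j)%nat
  end.

Definition event (nu : R) (n : nat) (c : config) : bool :=
  forallb (fun j => (demand c (imax nu n) j =? 0)%nat) (seq 0 (ntiles nu n (imax nu n))).

Definition tiles (nu : R) (n : nat) : list (nat * nat) :=
  flat_map (fun i => map (fun j => (i, j)) (seq 0 (ntiles nu n i))) (seq 0 (S (imax nu n))).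

Definition upd (c : config) (i j k : nat) : config :=
  fun a b => if (a =? i)%nat && (b =? j)%nat then k else c a b.

Fixpoint csum (alpha nu : R) (n M : nat) (L : list (nat * nat)) (c : config) : R :=
  match L with
  | nil => if event nu n c then 1 else 0
  | (i, j) :: L' =>
      sum_f_R0 (fun k => poisson_pmf (tile_mean alpha nu n i) k *
                         csum alpha nu n M L' (upd c i j k)) M
  end.

Definition seq_lim (u : nat -> R) : R := epsilon (inhabits 0) (fun l => Un_cv u l).

(* P(D_{i_max,j} = 0 for all j): the counts N(T_{i,j}) of a Poisson process on
   the disjoint tiles are independent Poisson(tile_mean) variables. *)
Definition prob_no_demand (alpha nu : R) (n : nat) : R :=
  seq_lim (fun M => csum alpha nu n M (tiles nu n) (fun _ _ => O)).

(* The counts N(T_{i,j}) are independent Poisson variables; the mean in row i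
   is at least (nu/32) (1 - 4^(-alpha)) 2^(i (1 - 2 alpha)), hence at least 16
   once nu is large.  For such a count E e^(-N) <= 2 e^(-mu/2) <= e^(-7), and
   since the demands of the two children of a tile depend on disjoint subtrees,
   the recursion e^(D_{i+1,j}) <= 1 + e^(3 - N(T_{i+1,j})) e^(D_{i,2j}) e^(D_{i,2j+1})
   keeps E e^(D_{i,j}) <= e^2 in every row, and in the top row gives
   E e^(D) <= 1 + 2 e^7 e^(-mu/2).  A union bound over the O(sqrt n) top tiles,
   whose mean grows like exp (9/20 (1 - 2 alpha) R), makes the failure
   probability smaller than any power of n.  The truncation of the counts at M
   in [prob_no_demand] is handled by conditioning every count on being at most
   M and letting M tend to infinity. *)

From Stdlib Require Import Reals Lra Lia ZArith List Bool Classical ClassicalEpsilon.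
Open Scope R_scope.

(** * Exponential series and limits *)

Lemma exp_le x y : x <= y -> exp x <= exp y.
Proof. intros [H | ->]; [left; apply exp_increasing|right]; auto. Qed.

Lemma exp_pow x n : exp x ^ n = exp (INR n * x).
Proof.
  induction n as [|n IH]; [simpl; rewrite Rmult_0_l, exp_0; reflexivity|].
  rewrite <- tech_pow_Rmult, IH, <- exp_plus, S_INR; f_equal; ring.
Qed.

Lemma exp_partial_sum_cv x : Un_cv (sum_f_R0 (fun k => / INR (fact k) * x ^ k)) (exp x).
Proof. unfold exp; destruct (exist_exp x) as [l Hl]; exact Hl. Qed.

Lemma exp_partial_sum_le x M : 0 <= x -> sum_f_R0 (fun k => / INR (fact k) * x ^ k) M <= exp x.
Proof.
  intro Hx; apply sum_incr; [apply exp_partial_sum_cv|].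
  intro k; apply Rmult_le_pos; [apply Rlt_le, Rinv_0_lt_compat, INR_fact_lt_0 | apply pow_le; lra].
Qed.

Lemma sqr_half_le_exp x : 0 <= x -> x ^ 2 / 2 <= exp x.
Proof.
  intro Hx; eapply Rle_trans; [|apply (exp_partial_sum_le x 2 Hx)].
  simpl; lra.
Qed.

Lemma Un_cv_const (a : R) : Un_cv (fun _ => a) a.
Proof. intros eps Heps; exists 0%nat; intros; rewrite R_dist_eq; lra. Qed.

Lemma Un_cv_le_eventually (u v : nat -> R) (N : nat) (l1 l2 : R) :
  (forall n, (N <= n)%nat -> u n <= v n) -> Un_cv u l1 -> Un_cv v l2 -> l1 <= l2.
Proof.
  intros Huv Hu Hv.
  apply (Rle_cv_lim (Un := fun n => u (n + N)%nat) (Vn := fun n => v (n + N)%nat));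
    [intro n; apply Huv; lia | apply CV_shift'; exact Hu | apply CV_shift'; exact Hv].
Qed.

(** * Expectations under product measures *)

Lemma upd_same c i j k : upd c i j k i j = k.
Proof. unfold upd; rewrite !Nat.eqb_refl; reflexivity. Qed.

Lemma upd_other c i j k a b : (a, b) <> (i, j) -> upd c i j k a b = c a b.
Proof.
  intro Hab; unfold upd.
  destruct (Nat.eqb_spec a i), (Nat.eqb_spec b j); subst; simpl; congruence.
Qed.

(* [prod_expect w M L f c] is the expectation of [f] when the counts at the
   sites of [L] are redrawn independently, site (i, j) with weights [w i j]
   on {0, ..., M}, and all other counts are read from [c]. *)
Fixpoint prod_expect (w : nat -> nat -> nat -> R) (M : nat) (L : list (nat * nat))
    (f : config -> R) (c : config) : R :=
  match L with
  | nil => f c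
  | (i, j) :: L' => sum_f_R0 (fun k => w i j k * prod_expect w M L' f (upd c i j k)) M
  end.

Definition is_prob_on (w : nat -> nat -> nat -> R) (M : nat) (L : list (nat * nat)) : Prop :=
  forall i j, In (i, j) L -> (forall k, 0 <= w i j k) /\ sum_f_R0 (w i j) M = 1.

Definition depends_on (f : config -> R) (A : nat -> nat -> Prop) : Prop :=
  forall c c', (forall a b, A a b -> c a b = c' a b) -> f c = f c'.

Section ProdExpect.

Variables (w : nat -> nat -> nat -> R) (M : nat).

Lemma is_prob_on_cons_inv s L : is_prob_on w M (s :: L) -> is_prob_on w M L.
Proof. intros H i j Hin; apply H; right; exact Hin. Qed.

Lemma prod_expect_plus L f g c :
  prod_expect w M L (fun c => f c + g c) c = prod_expect w M L f c + prod_expect w M L g c.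
Proof.
  revert c; induction L as [|[i j] L IH]; intro c; simpl; [reflexivity|].
  rewrite <- plus_sum; apply sum_eq; intros k _; rewrite IH; ring.
Qed.

Lemma prod_expect_scal L a f c :
  prod_expect w M L (fun c => a * f c) c = a * prod_expect w M L f c.
Proof.
  revert c; induction L as [|[i j] L IH]; intro c; simpl; [reflexivity|].
  rewrite scal_sum; apply sum_eq; intros k _; rewrite IH; ring.
Qed.

Lemma prod_expect_le L f g c : is_prob_on w M L -> (forall c, f c <= g c) ->
  prod_expect w M L f c <= prod_expect w M L g c.
Proof.
  revert c; induction L as [|[i j] L IH]; intros c Hw Hfg; simpl; [apply Hfg|].
  apply sum_Rle; intros k _; apply Rmult_le_compat_l.
  - apply (Hw i j (or_introl eq_refl)).
  - apply IH; [eapply is_prob_on_cons_inv; eauto | exact Hfg].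
Qed.

Lemma prod_expect_depends_on L f A : depends_on f A ->
  depends_on (prod_expect w M L f) (fun a b => A a b /\ ~ In (a, b) L).
Proof.
  intro Hf; induction L as [|[i j] L IH]; intros c c' Hcc'; simpl.
  - apply Hf; intros a b Hab; apply Hcc'; tauto.
  - apply sum_eq; intros k _; f_equal; apply IH; intros a b [HA HL].
    destruct (classic ((a, b) = (i, j))) as [E|E].
    + injection E as -> ->; rewrite !upd_same; reflexivity.
    + rewrite !upd_other by exact E; apply Hcc'; split; [exact HA|].
      intros [E'|E']; [apply E; symmetry; exact E' | exact (HL E')].
Qed.

Lemma prod_expect_upd_unused L f A i j k c : depends_on f A -> ~ A i j ->
  prod_expect w M L f (upd c i j k) = prod_expect w M L f c.
Proof.
  intros Hf Hij; apply (prod_expect_depends_on L f A Hf); intros a b [HA _].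
  apply upd_other; intro E; injection E as -> ->; exact (Hij HA).
Qed.

Lemma prod_expect_unused L f A c : is_prob_on w M L -> depends_on f A ->
  (forall a b, A a b -> ~ In (a, b) L) -> prod_expect w M L f c = f c.
Proof.
  intros Hw Hf; revert c; induction L as [|[i j] L IH]; intros c HAL; simpl; [reflexivity|].
  assert (HAij : ~ A i j) by (intro HA; apply (HAL i j HA); left; reflexivity).
  rewrite (sum_eq _ (fun k => w i j k * f c)).
  - rewrite <- scal_sum, (proj2 (Hw i j (or_introl eq_refl))); ring.
  - intros k _; rewrite IH.
    + f_equal; apply Hf; intros a b HA; apply upd_other; intro E; injection E as -> ->; auto.
    + eapply is_prob_on_cons_inv; eauto.
    + intros a b HA HL; apply (HAL a b HA); right; exact HL.
Qed.

Lemma prod_expect_const L a c : is_prob_on w M L -> prod_expect w M L (fun _ => a) c = a.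
Proof.
  intro Hw; apply (prod_expect_unused L (fun _ => a) (fun _ _ => False) c Hw); [|tauto].
  intros c1 c2 _; reflexivity.
Qed.

Lemma prod_expect_affine L a b f c : is_prob_on w M L ->
  prod_expect w M L (fun c => a + b * f c) c = a + b * prod_expect w M L f c.
Proof.
  intro Hw; rewrite (prod_expect_plus L (fun _ => a)), prod_expect_const, prod_expect_scal; auto.
Qed.

Lemma prod_expect_nonneg L f c : is_prob_on w M L -> (forall c, 0 <= f c) ->
  0 <= prod_expect w M L f c.
Proof.
  intros Hw Hf; rewrite <- (prod_expect_const L 0 c Hw); apply prod_expect_le; auto.
Qed.

Lemma prod_expect_mul_indep L f1 f2 A1 A2 c : is_prob_on w M L ->
  depends_on f1 A1 -> depends_on f2 A2 -> (forall a b, A1 a b -> A2 a b -> False) ->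
  prod_expect w M L (fun c => f1 c * f2 c) c = prod_expect w M L f1 c * prod_expect w M L f2 c.
Proof.
  intros Hw H1 H2 Hdisj; revert c; induction L as [|[i j] L IH]; intro c; simpl; [reflexivity|].
  assert (Hw' := is_prob_on_cons_inv _ _ Hw).
  destruct (Hw i j (or_introl eq_refl)) as [_ Hsum].
  assert (Hout : forall g A (h : nat -> R), depends_on g A -> ~ A i j ->
    sum_f_R0 (fun k => w i j k * (prod_expect w M L g (upd c i j k) * h k)) M
    = prod_expect w M L g c * sum_f_R0 (fun k => w i j k * h k) M).
  { intros g A h Hg HA; rewrite scal_sum; apply sum_eq; intros k _.
    rewrite (prod_expect_upd_unused L g A i j k c Hg HA); ring. }
  assert (Hunit : forall g A, depends_on g A -> ~ A i j ->
    sum_f_R0 (fun k => w i j k * prod_expect w M L g (upd c i j k)) M = prod_expect w M L g c).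
  { intros g A Hg HA.
    rewrite (sum_eq _ (fun k => w i j k * prod_expect w M L g c))
      by (intros k _; rewrite (prod_expect_upd_unused L g A i j k c Hg HA); reflexivity).
    rewrite <- scal_sum, Hsum; ring. }
  rewrite (sum_eq _ (fun k => w i j k * (prod_expect w M L f1 (upd c i j k) *
                                         prod_expect w M L f2 (upd c i j k))))
    by (intros k _; rewrite IH; auto).
  destruct (classic (A1 i j)) as [HA1|HA1].
  - assert (HA2 : ~ A2 i j) by (intro; eapply Hdisj; eauto).
    rewrite (sum_eq _ (fun k => w i j k * (prod_expect w M L f2 (upd c i j k) *
                                           prod_expect w M L f1 (upd c i j k))))
      by (intros k _; ring).
    rewrite (Hout f2 A2), (Hunit f2 A2) by auto; ring.
  - rewrite (Hout f1 A1), (Hunit f1 A1) by auto; reflexivity.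
Qed.

Lemma prod_expect_site L (h : nat -> R) i j c : is_prob_on w M L -> In (i, j) L ->
  prod_expect w M L (fun c => h (c i j)) c = sum_f_R0 (fun k => w i j k * h k) M.
Proof.
  intros Hw Hin; revert c; induction L as [|[a b] L IH]; intro c; [destruct Hin|simpl].
  assert (Hw' := is_prob_on_cons_inv _ _ Hw).
  assert (Hdep : depends_on (fun c => h (c i j)) (fun a b => a = i /\ b = j))
    by (intros c1 c2 H; rewrite (H i j); auto).
  destruct (classic (In (i, j) L)) as [HL|HL].
  - rewrite (sum_eq _ (fun k => w a b k * sum_f_R0 (fun k => w i j k * h k) M))
      by (intros k _; rewrite IH; auto).
    rewrite <- scal_sum, (proj2 (Hw a b (or_introl eq_refl))); ring.
  - destruct Hin as [E|E]; [injection E as <- <-|contradiction].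
    apply sum_eq; intros k _; f_equal.
    rewrite (prod_expect_unused L _ _ _ Hw' Hdep) by (intros a1 b1 [-> ->]; exact HL).
    rewrite upd_same; reflexivity.
Qed.

End ProdExpect.

(** * Demands and their exponential moments *)

(* The children of tile (i + 1, j) are (i, 2 j) and (i, 2 j + 1), so (a, b) lies
   in the subtree of (i, j) iff a <= i and b / 2^(i - a) = j. *)
Definition in_subtree (i j a b : nat) : Prop := (a <= i)%nat /\ (b / 2 ^ (i - a))%nat = j.

Lemma in_subtree_refl i j : in_subtree i j i j.
Proof. split; [lia|]; rewrite Nat.sub_diag; apply Nat.div_1_r. Qed.

Lemma in_subtree_child i j a b :
  in_subtree i (2 * j) a b \/ in_subtree i (2 * j + 1) a b -> in_subtree (S i) j a b.
Proof.
  intros [[Ha Hb]|[Ha Hb]]; split; try lia;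
    replace (S i - a)%nat with (S (i - a)) by lia;
    rewrite Nat.pow_succ_r', Nat.mul_comm, <- Nat.Div0.div_div, Hb.
  - rewrite Nat.mul_comm, Nat.div_mul; lia.
  - replace (2 * j + 1)%nat with (1 + j * 2)%nat by lia; rewrite Nat.div_add by lia; reflexivity.
Qed.

Lemma demand_local i j c c' : (forall a b, in_subtree i j a b -> c a b = c' a b) ->
  demand c i j = demand c' i j.
Proof.
  revert j; induction i as [|i IH]; intros j Hcc'; simpl.
  - rewrite (Hcc' 0%nat j) by apply in_subtree_refl; reflexivity.
  - rewrite (IH (j + (j + 0))%nat), (IH (j + (j + 0) + 1)%nat), (Hcc' (S i) j);
      [reflexivity | apply in_subtree_refl | |];
      intros a b Hab; apply Hcc', in_subtree_child;
      replace (2 * j)%nat with (j + (j + 0))%nat by lia; auto.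
Qed.

Definition exp_demand (c : config) (i j : nat) : R := exp (INR (demand c i j)).

Lemma exp_demand_depends_on i j : depends_on (fun c => exp_demand c i j) (in_subtree i j).
Proof. intros c c' H; unfold exp_demand; rewrite (demand_local i j c c' H); reflexivity. Qed.

Lemma exp_demand_ge_1 c i j : 1 <= exp_demand c i j.
Proof.
  unfold exp_demand; pose proof (pos_INR (demand c i j));
    pose proof (exp_ineq1_le (INR (demand c i j))); lra.
Qed.

Lemma exp_demand_row0_le c j : exp_demand c 0 j <= exp 2.
Proof.
  unfold exp_demand; simpl; apply exp_le.
  destruct (c 0%nat j =? 1)%nat eqn:E1; [apply Nat.eqb_eq in E1; rewrite E1; simpl; lra|].
  destruct (c 0%nat j =? 2)%nat eqn:E2; [apply Nat.eqb_eq in E2; rewrite E2; simpl; lra|].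
  simpl; lra.
Qed.

(* [exp (max x 0) <= 1 + exp x] turns the truncated recursion into a product. *)
Lemma exp_demand_succ_le c i j : exp_demand c (S i) j <=
  1 + exp 3 * (exp (-1) ^ c (S i) j * (exp_demand c i (2 * j) * exp_demand c i (2 * j + 1))).
Proof.
  unfold exp_demand; simpl demand; replace (j + (j + 0))%nat with (2 * j)%nat by lia.
  set (a := demand c i (2 * j)); set (b := demand c i (2 * j + 1)); set (N := c (S i) j).
  replace (exp 3 * (exp (-1) ^ N * (exp (INR a) * exp (INR b))))
    with (exp (INR a + INR b + 3 - INR N)).
  2:{ rewrite exp_pow, <- !exp_plus; f_equal; ring. }
  pose proof (exp_pos (INR a + INR b + 3 - INR N)).
  destruct (Nat.le_gt_cases N (a + b + 3)).
  - rewrite minus_INR, !plus_INR by lia; replace (INR 3) with 3 by (simpl; ring); lra.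
  - replace (a + b + 3 - N)%nat with 0%nat by lia; simpl; rewrite exp_0; lra.
Qed.

Definition exp_neg_moment (w : nat -> nat -> nat -> R) (M i j : nat) : R :=
  sum_f_R0 (fun k => w i j k * exp (-1) ^ k) M.

Section DemandMoments.

Variables (w : nat -> nat -> nat -> R) (M : nat) (L : list (nat * nat)) (c : config).
Hypothesis Hw : is_prob_on w M L.

Local Notation E f := (prod_expect w M L f c).

Lemma expect_exp_demand_succ_le i j : In (S i, j) L ->
  E (fun c => exp_demand c (S i) j) <= 1 + exp 3 * (exp_neg_moment w M (S i) j *
    (E (fun c => exp_demand c i (2 * j)) * E (fun c => exp_demand c i (2 * j + 1)))).
Proof.
  intro Hin.
  eapply Rle_trans; [apply prod_expect_le; [exact Hw | intro; apply exp_demand_succ_le]|].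
  rewrite prod_expect_affine by exact Hw.
  rewrite (prod_expect_mul_indep w M L _ _ (fun a b => a = S i /\ b = j)
             (fun a b => in_subtree (S i) j a b /\ a <> S i) c Hw).
  - rewrite (prod_expect_mul_indep w M L _ _ (in_subtree i (2 * j)) (in_subtree i (2 * j + 1)) c Hw);
      [| apply exp_demand_depends_on | apply exp_demand_depends_on | intros a b [_ H1] [_ H2]; lia].
    rewrite (prod_expect_site w M L (fun k => exp (-1) ^ k) (S i) j c Hw Hin); apply Rle_refl.
  - intros c1 c2 H; rewrite (H (S i) j); auto.
  - intros c1 c2 H.
    assert (Hsub : forall j', j' = (2 * j)%nat \/ j' = (2 * j + 1)%nat ->
      forall a b, in_subtree i j' a b -> c1 a b = c2 a b).
    { intros j' Hj' a b Hab; apply H; split.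
      - apply in_subtree_child; destruct Hj' as [-> | ->]; auto.
      - destruct Hab; lia. }
    rewrite (exp_demand_depends_on i (2 * j) c1 c2 (Hsub _ (or_introl eq_refl))),
      (exp_demand_depends_on i (2 * j + 1) c1 c2 (Hsub _ (or_intror eq_refl))); reflexivity.
  - intros a b [-> _] [_ Hne]; exact (Hne eq_refl).
Qed.

Lemma expect_exp_demand_succ_le_moment i j : In (S i, j) L ->
  E (fun c => exp_demand c i (2 * j)) <= exp 2 -> E (fun c => exp_demand c i (2 * j + 1)) <= exp 2 ->
  E (fun c => exp_demand c (S i) j) <= 1 + exp 7 * exp_neg_moment w M (S i) j.
Proof.
  intros Hin H1 H2.
  assert (Hm : 0 <= exp_neg_moment w M (S i) j).
  { apply cond_pos_sum; intro k; apply Rmult_le_pos;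
      [apply (Hw _ _ Hin) | apply pow_le, Rlt_le, exp_pos]. }
  assert (Hpos : forall i j, 0 <= E (fun c => exp_demand c i j)).
  { intros i' j'; apply prod_expect_nonneg; [exact Hw|].
    intro c'; pose proof (exp_demand_ge_1 c' i' j'); lra. }
  eapply Rle_trans; [apply expect_exp_demand_succ_le; exact Hin|].
  replace (exp 7) with (exp 3 * (exp 2 * exp 2)) by (rewrite <- !exp_plus; f_equal; ring).
  apply Rplus_le_compat_l; rewrite Rmult_assoc; apply Rmult_le_compat_l; [apply Rlt_le, exp_pos|].
  rewrite (Rmult_comm (exp 2 * exp 2)); apply Rmult_le_compat_l; [exact Hm|].
  apply Rmult_le_compat; auto.
Qed.

Lemma expect_exp_demand_le :
  (forall i j, In (S i, j) L -> In (i, 2 * j)%nat L /\ In (i, 2 * j + 1)%nat L) ->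
  (forall i j, In (S i, j) L -> exp_neg_moment w M (S i) j <= exp (-7)) ->
  forall i j, In (i, j) L -> E (fun c => exp_demand c i j) <= exp 2.
Proof.
  intros Hchild Hmom i; induction i as [|i IH]; intros j Hin.
  - rewrite <- (prod_expect_const w M L (exp 2) c Hw).
    apply prod_expect_le; [exact Hw | intro; apply exp_demand_row0_le].
  - destruct (Hchild i j Hin) as [H1 H2].
    eapply Rle_trans; [apply expect_exp_demand_succ_le_moment; auto|].
    assert (Hm : exp 7 * exp_neg_moment w M (S i) j <= exp 7 * exp (-7))
      by (apply Rmult_le_compat_l; [apply Rlt_le, exp_pos | auto]).
    rewrite <- exp_plus, Rplus_opp_r, exp_0 in Hm.
    pose proof (exp_ineq1_le 2); lra.
Qed.

(* Union bound, with [1{D > 0} <= exp D - 1] for integer [D]. *)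
Lemma prod_expect_all_zero_ge (D : config -> nat -> nat) (l : list nat) (b : R) :
  (forall j, In j l -> E (fun c => exp (INR (D c j))) <= 1 + b) ->
  1 - INR (length l) * b <= E (fun c => if forallb (fun j => D c j =? 0)%nat l then 1 else 0).
Proof.
  induction l as [|j l IH]; intro Hb; simpl forallb.
  - rewrite prod_expect_const by exact Hw; simpl; lra.
  - set (ind := fun c => if forallb (fun j => D c j =? 0)%nat l then 1 else 0).
    assert (Hpt : forall c, (1 + ind c) + -1 * exp (INR (D c j)) <=
                            (if (D c j =? 0)%nat && forallb (fun j => D c j =? 0)%nat l then 1 else 0)).
    { intro c'; assert (0 <= ind c' <= 1) by (unfold ind; destruct forallb; lra).
      destruct (D c' j =? 0)%nat eqn:ED; simpl.
      - apply Nat.eqb_eq in ED; rewrite ED; simpl; rewrite exp_0; fold (ind c'); lra.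
      - apply Nat.eqb_neq in ED.
        assert (1 <= INR (D c' j)) by (apply (le_INR 1); lia).
        pose proof (exp_ineq1_le (INR (D c' j))); lra. }
    eapply Rle_trans; [|apply prod_expect_le; [exact Hw | exact Hpt]].
    rewrite !prod_expect_plus, prod_expect_const, prod_expect_scal by exact Hw.
    specialize (IH (fun j' Hj' => Hb j' (or_intror Hj'))); specialize (Hb j (or_introl eq_refl)).
    fold ind in IH; simpl length; rewrite S_INR; lra.
Qed.

End DemandMoments.

(** * Truncated Poisson counts *)

Definition poisson_cdf (mu : R) (M : nat) : R := sum_f_R0 (poisson_pmf mu) M.

Lemma poisson_pmf_nonneg mu k : 0 <= mu -> 0 <= poisson_pmf mu k.
Proof.
  intro Hmu; unfold poisson_pmf, Rdiv; apply Rmult_le_pos;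
    [apply Rmult_le_pos; [apply Rlt_le, exp_pos | apply pow_le, Hmu]
    | apply Rlt_le, Rinv_0_lt_compat, INR_fact_lt_0].
Qed.

Lemma poisson_pmf_sum_pow mu x M :
  sum_f_R0 (fun k => poisson_pmf mu k * x ^ k) M
  = exp (- mu) * sum_f_R0 (fun k => / INR (fact k) * (mu * x) ^ k) M.
Proof.
  rewrite scal_sum; apply sum_eq; intros k _; unfold poisson_pmf, Rdiv.
  rewrite Rpow_mult_distr; ring.
Qed.

Lemma poisson_cdf_eq mu M :
  poisson_cdf mu M = exp (- mu) * sum_f_R0 (fun k => / INR (fact k) * mu ^ k) M.
Proof.
  unfold poisson_cdf; rewrite scal_sum; apply sum_eq; intros k _.
  unfold poisson_pmf, Rdiv; ring.
Qed.

Lemma poisson_cdf_cv mu : Un_cv (poisson_cdf mu) 1.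
Proof.
  replace 1 with (exp (- mu) * exp mu) by (rewrite <- exp_plus, Rplus_opp_l; apply exp_0).
  intros eps Heps; destruct (CV_mult _ _ _ _ (Un_cv_const (exp (- mu))) (exp_partial_sum_cv mu) eps Heps)
    as [N HN].
  exists N; intros M HM; rewrite poisson_cdf_eq; exact (HN M HM).
Qed.

Lemma poisson_cdf_pos mu M : 0 <= mu -> 0 < poisson_cdf mu M.
Proof.
  intro Hmu; induction M as [|M IH].
  - unfold poisson_cdf, poisson_pmf; simpl; rewrite Rmult_1_r, Rdiv_1_r; apply exp_pos.
  - unfold poisson_cdf; rewrite tech5; fold (poisson_cdf mu M).
    pose proof (poisson_pmf_nonneg mu (S M) Hmu); lra.
Qed.

Lemma poisson_cdf_le_1 mu M : 0 <= mu -> poisson_cdf mu M <= 1.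
Proof.
  intro Hmu; rewrite poisson_cdf_eq.
  replace 1 with (exp (- mu) * exp mu) by (rewrite <- exp_plus, Rplus_opp_l; apply exp_0).
  apply Rmult_le_compat_l; [apply Rlt_le, exp_pos | apply exp_partial_sum_le, Hmu].
Qed.

(* [E e^{-N} <= exp (- mu (1 - e^{-1}))] for [N ~ Poisson mu], and [e^{-1} <= 1/2]. *)
Lemma poisson_exp_neg_sum_le mu M : 0 <= mu ->
  sum_f_R0 (fun k => poisson_pmf mu k * exp (-1) ^ k) M <= exp (- mu / 2).
Proof.
  intro Hmu.
  assert (He : exp (-1) <= / 2).
  { replace (exp (-1)) with (/ exp 1) by (rewrite <- exp_Ropp; f_equal; ring).
    apply Rinv_le_contravar; [lra|].
    pose proof (exp_ineq1 1 ltac:(lra)); lra. }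
  rewrite poisson_pmf_sum_pow.
  eapply Rle_trans.
  - apply Rmult_le_compat_l; [apply Rlt_le, exp_pos|].
    apply exp_partial_sum_le, Rmult_le_pos; [exact Hmu | apply Rlt_le, exp_pos].
  - rewrite <- exp_plus; apply exp_le.
    assert (mu * exp (-1) <= mu * / 2) by (apply Rmult_le_compat_l; auto); lra.
Qed.

Definition poisson_trunc (mu : R) (M k : nat) : R := poisson_pmf mu k / poisson_cdf mu M.

Lemma poisson_trunc_is_prob (mu : nat -> R) M L : (forall i j, In (i, j) L -> 0 <= mu i) ->
  is_prob_on (fun i _ => poisson_trunc (mu i) M) M L.
Proof.
  intros Hmu i j Hin; pose proof (poisson_cdf_pos (mu i) M (Hmu i j Hin)); split.
  - intro k; apply Rmult_le_pos;
      [apply poisson_pmf_nonneg, (Hmu i j Hin) | apply Rlt_le, Rinv_0_lt_compat; lra].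
  - unfold poisson_trunc, Rdiv; rewrite <- scal_sum; fold (poisson_cdf (mu i) M); field; lra.
Qed.

Lemma poisson_trunc_exp_neg_moment_le mu M : 0 <= mu -> / 2 <= poisson_cdf mu M ->
  sum_f_R0 (fun k => poisson_trunc mu M k * exp (-1) ^ k) M <= 2 * exp (- mu / 2).
Proof.
  intros Hmu Hcdf.
  replace (sum_f_R0 (fun k => poisson_trunc mu M k * exp (-1) ^ k) M)
    with (/ poisson_cdf mu M * sum_f_R0 (fun k => poisson_pmf mu k * exp (-1) ^ k) M)
    by (rewrite scal_sum; apply sum_eq; intros k _; unfold poisson_trunc, Rdiv; ring).
  apply Rmult_le_compat.
  - apply Rlt_le, Rinv_0_lt_compat; lra.
  - apply cond_pos_sum; intro k;
      apply Rmult_le_pos; [apply poisson_pmf_nonneg, Hmu | apply pow_le, Rlt_le, exp_pos].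
  - rewrite <- (Rinv_inv 2); apply Rinv_le_contravar; lra.
  - apply poisson_exp_neg_sum_le, Hmu.
Qed.

Definition cdf_prod (mu : nat -> R) (M : nat) (L : list (nat * nat)) : R :=
  fold_right (fun s acc => poisson_cdf (mu (fst s)) M * acc) 1 L.

Lemma cdf_prod_cv mu L : Un_cv (fun M => cdf_prod mu M L) 1.
Proof.
  induction L as [|s L IH]; simpl; [apply Un_cv_const|].
  rewrite <- (Rmult_1_r 1); apply CV_mult; [apply poisson_cdf_cv | exact IH].
Qed.

Lemma cdf_prod_bounds mu M L : (forall i j, In (i, j) L -> 0 <= mu i) ->
  0 <= cdf_prod mu M L <= 1.
Proof.
  induction L as [|[i j] L IH]; intro Hmu; simpl; [lra|].
  assert (Hi : 0 <= mu i) by (apply (Hmu i j); left; reflexivity).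
  pose proof (poisson_cdf_pos _ M Hi); pose proof (poisson_cdf_le_1 _ M Hi).
  destruct IH as [Hp0 Hp1]; [intros i' j' Hin; apply (Hmu i' j'); right; exact Hin|].
  split; [apply Rmult_le_pos; lra|].
  rewrite <- (Rmult_1_r 1); apply Rmult_le_compat; lra.
Qed.

Lemma cdf_prod_le_factor mu M L i j : (forall i j, In (i, j) L -> 0 <= mu i) -> In (i, j) L ->
  cdf_prod mu M L <= poisson_cdf (mu i) M.
Proof.
  induction L as [|[a b] L IH]; intros Hmu Hin; [destruct Hin|simpl].
  assert (Ha : 0 <= mu a) by (apply (Hmu a b); left; reflexivity).
  assert (HL : forall i j, In (i, j) L -> 0 <= mu i) by (intros i' j' H; apply (Hmu i' j'); right; exact H).
  pose proof (poisson_cdf_pos _ M Ha); pose proof (poisson_cdf_le_1 _ M Ha).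
  destruct (cdf_prod_bounds mu M L HL) as [Hp0 Hp1].
  destruct Hin as [E|Hin].
  - injection E as -> ->; rewrite <- (Rmult_1_r (poisson_cdf (mu i) M)) at 2.
    apply Rmult_le_compat_l; lra.
  - pose proof (IH HL Hin); rewrite <- (Rmult_1_l (poisson_cdf (mu i) M)).
    apply Rmult_le_compat; lra.
Qed.

(** * The probability that no demand reaches the top row *)

Definition no_demand_ind (nu : R) (n : nat) (c : config) : R := if event nu n c then 1 else 0.

Lemma csum_eq alpha nu n M L c : (forall i j, In (i, j) L -> 0 <= tile_mean alpha nu n i) ->
  csum alpha nu n M L c = cdf_prod (tile_mean alpha nu n) M L *
    prod_expect (fun i _ => poisson_trunc (tile_mean alpha nu n i) M) M L (no_demand_ind nu n) c.
Proof.
  revert c; induction L as [|[i j] L IH]; intros c Hmu; simpl; [unfold no_demand_ind; ring|].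
  assert (Hcdf := poisson_cdf_pos _ M (Hmu i j (or_introl eq_refl))).
  rewrite scal_sum; apply sum_eq; intros k _.
  rewrite IH by (intros i' j' Hin; apply (Hmu i' j'); right; exact Hin).
  unfold poisson_trunc; field; lra.
Qed.

Lemma csum_nonneg alpha nu n M L c : (forall i j, In (i, j) L -> 0 <= tile_mean alpha nu n i) ->
  0 <= csum alpha nu n M L c.
Proof.
  revert c; induction L as [|[i j] L IH]; intros c Hmu; simpl; [destruct event; lra|].
  apply cond_pos_sum; intro k; apply Rmult_le_pos;
    [apply poisson_pmf_nonneg, (Hmu i j), in_eq | apply IH; intros i' j' H; apply (Hmu i' j'), in_cons, H].
Qed.

Lemma csum_le_S alpha nu n M L c : (forall i j, In (i, j) L -> 0 <= tile_mean alpha nu n i) ->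
  csum alpha nu n M L c <= csum alpha nu n (S M) L c.
Proof.
  revert c; induction L as [|[i j] L IH]; intros c Hmu; simpl; [lra|].
  assert (Hi : 0 <= tile_mean alpha nu n i) by apply (Hmu i j), in_eq.
  assert (HL : forall i j, In (i, j) L -> 0 <= tile_mean alpha nu n i)
    by (intros i' j' H; apply (Hmu i' j'), in_cons, H).
  assert (0 <= poisson_pmf (tile_mean alpha nu n i) (S M) * csum alpha nu n (S M) L (upd c i j (S M)))
    by (apply Rmult_le_pos; [apply poisson_pmf_nonneg, Hi | apply csum_nonneg, HL]).
  enough (sum_f_R0 (fun k => poisson_pmf (tile_mean alpha nu n i) k * csum alpha nu n M L (upd c i j k)) M
          <= sum_f_R0 (fun k => poisson_pmf (tile_mean alpha nu n i) k * csum alpha nu n (S M) L (upd c i j k)) M)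
    by lra.
  apply sum_Rle; intros k _; apply Rmult_le_compat_l; [apply poisson_pmf_nonneg, Hi | apply IH, HL].
Qed.

Lemma in_tiles nu n i j : In (i, j) (tiles nu n) <-> (i <= imax nu n)%nat /\ (j < ntiles nu n i)%nat.
Proof.
  unfold tiles; rewrite in_flat_map; split.
  - intros [i' [Hi' Hm]]; apply in_map_iff in Hm; destruct Hm as [j' [E Hj']].
    injection E as <- <-; apply in_seq in Hi'; apply in_seq in Hj'; lia.
  - intros [Hi Hj]; exists i; split; [apply in_seq; lia|].
    apply in_map_iff; exists j; split; [reflexivity | apply in_seq; lia].
Qed.

Section NoDemandProbability.

Variables (alpha nu : R) (n : nat).

Local Notation mu := (tile_mean alpha nu n).
Local Notation im := (imax nu n).
Local Notation u M := (csum alpha nu n M (tiles nu n) (fun _ _ => O)).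

Hypothesis Hmu0 : forall i, (i <= im)%nat -> 0 <= mu i.

Lemma tile_mean_nonneg_on_tiles i j : In (i, j) (tiles nu n) -> 0 <= mu i.
Proof. intro Hin; apply in_tiles in Hin; exact (Hmu0 i (proj1 Hin)). Qed.

Lemma csum_tiles_bounds M : 0 <= u M <= 1.
Proof.
  rewrite csum_eq by apply tile_mean_nonneg_on_tiles.
  set (w := fun i (_ : nat) => poisson_trunc (mu i) M).
  assert (Hw : is_prob_on w M (tiles nu n)) by apply poisson_trunc_is_prob, tile_mean_nonneg_on_tiles.
  assert (Hind : forall c, 0 <= no_demand_ind nu n c <= 1)
    by (intro c; unfold no_demand_ind; destruct event; lra).
  destruct (cdf_prod_bounds mu M (tiles nu n) tile_mean_nonneg_on_tiles).
  assert (0 <= prod_expect w M (tiles nu n) (no_demand_ind nu n) (fun _ _ => O))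
    by (apply prod_expect_nonneg; [exact Hw | apply Hind]).
  assert (prod_expect w M (tiles nu n) (no_demand_ind nu n) (fun _ _ => O) <= 1).
  { rewrite <- (prod_expect_const w M (tiles nu n) 1 (fun _ _ => O) Hw).
    apply prod_expect_le; [exact Hw | apply Hind]. }
  split; [apply Rmult_le_pos; lra|].
  rewrite <- (Rmult_1_r 1); apply Rmult_le_compat; lra.
Qed.

Lemma prob_no_demand_cv : Un_cv (fun M => u M) (prob_no_demand alpha nu n).
Proof.
  assert (Hgrow : Un_growing (fun M => u M))
    by (intro M; apply csum_le_S, tile_mean_nonneg_on_tiles).
  destruct (growing_cv _ Hgrow) as [l Hl].
  - exists 1; intros x [M ->]; apply csum_tiles_bounds.
  - replace (prob_no_demand alpha nu n) with l; [exact Hl|].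
    apply (UL_sequence _ _ _ Hl); apply (epsilon_spec (inhabits 0) (fun l => Un_cv _ l)).
    exists l; exact Hl.
Qed.

Lemma prob_no_demand_le_1 : prob_no_demand alpha nu n <= 1.
Proof.
  apply (Rle_cv_lim (fun M => proj2 (csum_tiles_bounds M)) prob_no_demand_cv (Un_cv_const 1)).
Qed.

End NoDemandProbability.

Section NoDemandLowerBound.

Variables (alpha nu : R) (n : nat).

Local Notation mu := (tile_mean alpha nu n).
Local Notation im := (imax nu n).
Local Notation u M := (csum alpha nu n M (tiles nu n) (fun _ _ => O)).

Hypothesis Hmu : forall i, (i <= im)%nat -> 16 <= mu i.
Hypothesis Him : (1 <= im)%nat.
Hypothesis Hdouble : forall i, (i < im)%nat -> ntiles nu n i = (2 * ntiles nu n (S i))%nat.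

Let Hmu0 i (Hi : (i <= im)%nat) : 0 <= mu i.
Proof. pose proof (Hmu i Hi); lra. Qed.

Let Hmu_tiles i j : In (i, j) (tiles nu n) -> 0 <= mu i.
Proof. exact (tile_mean_nonneg_on_tiles alpha nu n Hmu0 i j). Qed.

Lemma expect_no_demand_ge M : / 2 <= cdf_prod mu M (tiles nu n) ->
  1 - INR (ntiles nu n im) * (exp 7 * (2 * exp (- mu im / 2))) <=
  prod_expect (fun i _ => poisson_trunc (mu i) M) M (tiles nu n) (no_demand_ind nu n) (fun _ _ => O).
Proof.
  intro Hprod.
  set (w := fun i (_ : nat) => poisson_trunc (mu i) M).
  assert (Hw : is_prob_on w M (tiles nu n)) by apply poisson_trunc_is_prob, Hmu_tiles.
  assert (Hmom : forall i j, In (i, j) (tiles nu n) -> exp_neg_moment w M i j <= 2 * exp (- mu i / 2)).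
  { intros i j Hin; apply poisson_trunc_exp_neg_moment_le; [eapply Hmu_tiles; eauto|].
    eapply Rle_trans; [exact Hprod | apply (cdf_prod_le_factor _ _ _ i j Hmu_tiles Hin)]. }
  assert (Hsmall : forall i, (i <= im)%nat -> 2 * exp (- mu i / 2) <= exp (-7)).
  { intros i Hi; replace (exp (-7)) with (exp 1 * exp (-8)) by (rewrite <- exp_plus; f_equal; ring).
    pose proof (exp_ineq1 1 ltac:(lra)); pose proof (exp_pos (-8)).
    assert (exp (- mu i / 2) <= exp (-8)) by (apply exp_le; pose proof (Hmu i Hi); lra).
    nra. }
  assert (Hchild : forall i j, In (S i, j) (tiles nu n) ->
                     In (i, 2 * j)%nat (tiles nu n) /\ In (i, 2 * j + 1)%nat (tiles nu n)).
  { intros i j Hin; apply in_tiles in Hin; rewrite !in_tiles, Hdouble; lia. }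
  destruct im as [|i] eqn:Eim; [lia|].
  unfold no_demand_ind, event; rewrite Eim.
  rewrite <- (length_seq (ntiles nu n (S i)) 0) at 1.
  apply (prod_expect_all_zero_ge w M (tiles nu n) _ Hw (fun c j => demand c (S i) j)).
  intros j Hj; apply in_seq in Hj.
  assert (Hin : In (S i, j) (tiles nu n)) by (apply in_tiles; rewrite Eim; lia).
  eapply Rle_trans.
  - apply (expect_exp_demand_succ_le_moment w M (tiles nu n) _ Hw i j Hin);
      apply (expect_exp_demand_le w M (tiles nu n) _ Hw Hchild); try apply Hchild, Hin.
    all: intros i' j' Hin'; eapply Rle_trans; [apply Hmom, Hin'|];
      apply Hsmall; apply in_tiles in Hin'; rewrite Eim in Hin'; lia.
  - apply Rplus_le_compat_l, Rmult_le_compat_l; [apply Rlt_le, exp_pos | apply Hmom, Hin].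
Qed.

Lemma prob_no_demand_ge :
  1 - INR (ntiles nu n im) * (exp 7 * (2 * exp (- mu im / 2))) <= prob_no_demand alpha nu n.
Proof.
  set (B := INR (ntiles nu n im) * (exp 7 * (2 * exp (- mu im / 2)))).
  destruct (cdf_prod_cv mu (tiles nu n) (/ 2) ltac:(lra)) as [M1 HM1].
  apply (Un_cv_le_eventually (fun M => cdf_prod mu M (tiles nu n) * (1 - B)) (fun M => u M) M1).
  - intros M HM; rewrite csum_eq by apply Hmu_tiles.
    assert (Hprod : / 2 <= cdf_prod mu M (tiles nu n))
      by (specialize (HM1 M HM); unfold Rdist in HM1; apply Rabs_def2 in HM1; lra).
    apply Rmult_le_compat_l; [lra | apply expect_no_demand_ge, Hprod].
  - pose proof (CV_mult _ _ _ _ (cdf_prod_cv mu (tiles nu n)) (Un_cv_const (1 - B))) as Hcv.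
    rewrite Rmult_1_l in Hcv; exact Hcv.
  - exact (prob_no_demand_cv alpha nu n Hmu0).
Qed.

End NoDemandLowerBound.

(** * Geometry of the tiling *)

Lemma floorZ_spec x : IZR (floorZ x) <= x /\ x - 1 < IZR (floorZ x).
Proof. unfold floorZ; rewrite minus_IZR; destruct (archimed x); lra. Qed.

Lemma ceilZ_spec x : x <= IZR (ceilZ x) /\ IZR (ceilZ x) < x + 1.
Proof. unfold ceilZ; rewrite minus_IZR; destruct (archimed (- x)); lra. Qed.

Lemma ln2_pos : 0 < ln 2.
Proof. rewrite <- ln_1; apply ln_increasing; lra. Qed.

Lemma pow2_INR_exp m : INR (2 ^ m) = exp (INR m * ln 2).
Proof. rewrite pow_INR, <- Rpower_pow by (simpl; lra); reflexivity. Qed.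

Lemma exp_4ln2 : exp (4 * ln 2) = 16.
Proof. replace 4 with (INR 4) at 1 by (simpl; ring); rewrite <- pow2_INR_exp; simpl; ring. Qed.

Section TileGeometry.

Variables (nu : R) (n : nat).
Hypothesis Hnu : 0 < nu.
Hypothesis Hn : nu < INR n.

Local Notation R := (Rrad nu n).

Lemma INR_n_eq : INR n = nu * exp (R / 2).
Proof.
  unfold Rrad; replace (2 * ln (INR n / nu) / 2) with (ln (INR n / nu)) by field.
  rewrite exp_ln by (apply Rdiv_lt_0_compat; lra); field; lra.
Qed.

Lemma Rrad_pos : 0 < R.
Proof.
  pose proof INR_n_eq as E.
  destruct (Rlt_le_dec 0 R) as [|HR]; [assumption|].
  assert (exp (R / 2) <= 1) by (rewrite <- exp_0; apply exp_le; lra).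
  nra.
Qed.

Lemma imax_bounds : 9 / 10 * R / (2 * ln 2) <= INR (imax nu n) < 9 / 10 * R / (2 * ln 2) + 1.
Proof.
  pose proof ln2_pos; pose proof Rrad_pos.
  destruct (ceilZ_spec (9 / 10 * R / (2 * ln 2))) as [H1 H2].
  assert (0 <= 9 / 10 * R / (2 * ln 2)) by (apply Rmult_le_pos; [lra | apply Rlt_le, Rinv_0_lt_compat; lra]).
  unfold imax; rewrite INR_IZR_INZ, Z2Nat.id by (apply le_IZR; lra); lra.
Qed.

Lemma ntiles_exponent_bounds i : (i <= imax nu n)%nat ->
  let e := (4 - Z.of_nat i + floorZ (R / (2 * ln 2)))%Z in
  (1 <= e)%Z /\ IZR e <= 4 - INR i + R / (2 * ln 2).
Proof.
  intros Hi e; pose proof ln2_pos; pose proof imax_bounds; pose proof Rrad_pos.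
  apply le_INR in Hi; destruct (floorZ_spec (R / (2 * ln 2))).
  assert (9 / 10 * R / (2 * ln 2) <= R / (2 * ln 2)).
  { unfold Rdiv; apply Rmult_le_compat_r; [apply Rlt_le, Rinv_0_lt_compat|]; lra. }
  assert (HE : IZR e = 4 - INR i + IZR (floorZ (R / (2 * ln 2))))
    by (unfold e; rewrite plus_IZR, minus_IZR, <- INR_IZR_INZ; reflexivity).
  split; [apply le_IZR|]; lra.
Qed.

Lemma ntiles_double i : (i < imax nu n)%nat -> ntiles nu n i = (2 * ntiles nu n (S i))%nat.
Proof.
  intro Hi; destruct (ntiles_exponent_bounds (S i) Hi) as [He _].
  unfold ntiles; rewrite Nat2Z.inj_succ in *.
  replace (4 - Z.of_nat i + floorZ (R / (2 * ln 2)))%Z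
    with (1 + (4 - Z.succ (Z.of_nat i) + floorZ (R / (2 * ln 2))))%Z by lia.
  rewrite Z2Nat.inj_add by lia; reflexivity.
Qed.

Lemma ntiles_le i : (i <= imax nu n)%nat -> INR (ntiles nu n i) <= exp ((4 - INR i) * ln 2 + R / 2).
Proof.
  intro Hi; destruct (ntiles_exponent_bounds i Hi) as [He Hle]; pose proof ln2_pos.
  unfold ntiles; rewrite pow2_INR_exp, INR_IZR_INZ, Z2Nat.id by lia; apply exp_le.
  replace (R / 2) with (R / (2 * ln 2) * ln 2) by (field; lra).
  rewrite <- Rmult_plus_distr_r; apply Rmult_le_compat_r; lra.
Qed.

Lemma ntiles_le_16 i : (i <= imax nu n)%nat -> INR (ntiles nu n i) <= 16 * exp (R / 2).
Proof.
  intro Hi; eapply Rle_trans; [apply ntiles_le, Hi|]; rewrite <- exp_4ln2, <- exp_plus.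
  apply exp_le; pose proof ln2_pos; pose proof (pos_INR i); nra.
Qed.

Lemma n_div_ntiles_ge i : (i <= imax nu n)%nat ->
  nu * exp ((INR i - 4) * ln 2) <= INR n / INR (ntiles nu n i).
Proof.
  intro Hi; pose proof (ntiles_le i Hi) as Hle.
  assert (Hpos : 0 < INR (ntiles nu n i)) by (unfold ntiles; rewrite pow2_INR_exp; apply exp_pos).
  apply (Rmult_le_reg_r (INR (ntiles nu n i))); [exact Hpos|].
  replace (INR n / INR (ntiles nu n i) * INR (ntiles nu n i)) with (INR n) by (field; lra).
  rewrite INR_n_eq.
  replace (exp (R / 2)) with (exp ((INR i - 4) * ln 2) * exp ((4 - INR i) * ln 2 + R / 2))
    by (rewrite <- exp_plus; f_equal; ring).
  rewrite Rmult_assoc; apply Rmult_le_compat_l; [lra|].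
  apply Rmult_le_compat_l; [apply Rlt_le, exp_pos | exact Hle].
Qed.

Lemma imax_ge_1 : 40 * ln 2 <= R -> (1 <= imax nu n)%nat.
Proof.
  intro HR; pose proof ln2_pos; destruct imax_bounds as [Him _].
  assert (0 < 9 / 10 * R / (2 * ln 2)) by (apply Rdiv_lt_0_compat; lra).
  destruct (imax nu n); [simpl in Him; lra | lia].
Qed.

Lemma row_radius_ge i : (i <= imax nu n)%nat -> R / 10 - 2 * ln 2 <= R - 2 * INR i * ln 2.
Proof.
  intro Hi; pose proof ln2_pos; destruct imax_bounds as [_ Him]; apply le_INR in Hi.
  replace (R / 10) with (R - 9 / 10 * R / (2 * ln 2) * (2 * ln 2)) by (field; lra).
  assert (INR i * (2 * ln 2) <= (9 / 10 * R / (2 * ln 2) + 1) * (2 * ln 2))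
    by (apply Rmult_le_compat_r; lra).
  lra.
Qed.

Lemma tile_radii i : 40 * ln 2 <= R -> (i <= imax nu n)%nat ->
  r_hi nu n i = R - 2 * INR i * ln 2 /\ r_lo nu n i = R - 2 * (INR i + 1) * ln 2.
Proof.
  intros HR Hi; pose proof ln2_pos; pose proof (row_radius_ge i Hi).
  unfold r_hi, r_lo; split; apply Rmax_right; lra.
Qed.

End TileGeometry.

Lemma cosh_sub_1_bounds t : 0 < t -> 0 < cosh t - 1 <= exp t / 2.
Proof.
  intro Ht; unfold cosh; pose proof (exp_ineq1 t ltac:(lra)); pose proof (exp_ineq1_le (- t)).
  assert (exp (- t) <= 1) by (rewrite <- exp_0; apply exp_le; lra); lra.
Qed.

Lemma cosh_band_ratio_ge a d t : 0 < d <= a -> a <= t -> 2 <= exp a * (1 - exp (- d)) ->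
  (1 - exp (- d)) / 2 * exp (a - t) <= (cosh a - cosh (a - d)) / (cosh t - 1).
Proof.
  intros Hda Hat Hbig; destruct (cosh_sub_1_bounds t ltac:(lra)) as [Ht0 Ht].
  assert (Hband : exp a * (1 - exp (- d)) / 4 <= cosh a - cosh (a - d)).
  { unfold cosh; replace (exp (a - d)) with (exp a * exp (- d)) by (rewrite <- exp_plus; f_equal; ring).
    assert (exp (- (a - d)) <= 1) by (rewrite <- exp_0; apply exp_le; lra).
    pose proof (exp_pos (- a)); lra. }
  apply (Rmult_le_reg_r (cosh t - 1)); [exact Ht0|].
  replace ((cosh a - cosh (a - d)) / (cosh t - 1) * (cosh t - 1)) with (cosh a - cosh (a - d))
    by (field; lra).
  eapply Rle_trans; [|exact Hband].
  replace (exp a) with (exp (a - t) * exp t) by (rewrite <- exp_plus; f_equal; ring).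
  assert (0 <= (1 - exp (- d)) / 2 * exp (a - t)).
  { apply Rmult_le_pos; [|apply Rlt_le, exp_pos].
    assert (exp (- d) <= 1) by (rewrite <- exp_0; apply exp_le; lra); lra. }
  apply Rle_trans with ((1 - exp (- d)) / 2 * exp (a - t) * (exp t / 2)); [apply Rmult_le_compat_l; lra|].
  right; field.
Qed.

(* [band_frac alpha = 1 - 4^(-alpha)]: for large [r], the outermost band
   [r - 2 ln 2, r] carries about this fraction of the [f_{alpha,R}]-mass of the
   disc of radius [r]. *)
Definition band_frac (alpha : R) : R := 1 - exp (- (2 * alpha * ln 2)).

Lemma band_frac_bounds alpha : 0 < alpha -> 0 < band_frac alpha < 1.
Proof.
  intro Ha; pose proof ln2_pos; pose proof (exp_pos (- (2 * alpha * ln 2))).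
  assert (exp (- (2 * alpha * ln 2)) < 1) by (rewrite <- exp_0; apply exp_increasing; nra).
  unfold band_frac; lra.
Qed.



Lemma tile_mean_eq alpha nu n i : 0 < alpha -> 0 < nu -> nu < INR n ->
  40 * ln 2 <= Rrad nu n -> (i <= imax nu n)%nat ->
  let a := alpha * (Rrad nu n - 2 * INR i * ln 2) in
  tile_mean alpha nu n i = INR n / INR (ntiles nu n i) *
    ((cosh a - cosh (a - 2 * alpha * ln 2)) / (cosh (alpha * Rrad nu n) - 1)).
Proof.
  intros Ha Hnu Hn HR Hi a.
  destruct (tile_radii nu n Hnu Hn i HR Hi) as [Hhi Hlo].
  pose proof (Rrad_pos nu n Hnu Hn); pose proof PI_RGT_0.
  destruct (cosh_sub_1_bounds (alpha * Rrad nu n) ltac:(nra)) as [Hcosh _].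
  assert (0 < INR (ntiles nu n i)) by (unfold ntiles; rewrite pow2_INR_exp; apply exp_pos).
  unfold tile_mean; rewrite Hhi, Hlo; fold a.
  replace (alpha * (Rrad nu n - 2 * (INR i + 1) * ln 2)) with (a - 2 * alpha * ln 2) by (unfold a; ring).
  field; repeat split; lra.
Qed.

(* The second radius hypothesis gives [exp (alpha r_hi) * band_frac alpha >= 2],
   which absorbs the [exp (- alpha r)] parts of the cosh's. *)
Lemma tile_mean_ge alpha nu n i : 0 < alpha < 1 / 2 -> 0 < nu -> nu < INR n ->
  40 * ln 2 <= Rrad nu n -> 10 * (ln (2 / band_frac alpha) / alpha + 2 * ln 2) <= Rrad nu n ->
  (i <= imax nu n)%nat ->
  nu * band_frac alpha / 32 * exp (INR i * ln 2 * (1 - 2 * alpha)) <= tile_mean alpha nu n i.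
Proof.
  intros Ha Hnu Hn HR1 HR2 Hi.
  pose proof ln2_pos; pose proof (band_frac_bounds alpha (proj1 Ha)) as Hc.
  rewrite (tile_mean_eq alpha nu n i (proj1 Ha) Hnu Hn HR1 Hi).
  pose proof (row_radius_ge nu n Hnu Hn i Hi) as Hrow.
  set (R := Rrad nu n) in *; set (a := alpha * (R - 2 * INR i * ln 2)); set (d := 2 * alpha * ln 2).
  assert (Ha_lo : alpha * (R / 10 - 2 * ln 2) <= a) by (apply Rmult_le_compat_l; lra).
  assert (Hd : 0 < d <= a) by (unfold d; split; nra).
  assert (Hat : a <= alpha * R).
  { assert (0 <= alpha * (INR i * ln 2)) by (apply Rmult_le_pos; [lra | apply Rmult_le_pos; [apply pos_INR | lra]]).
    unfold a; lra. }
  assert (Hbig : 2 <= exp a * band_frac alpha).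
  { assert (Hln : ln (2 / band_frac alpha) <= a).
    { apply Rle_trans with (alpha * (R / 10 - 2 * ln 2)); [|exact Ha_lo].
      replace (ln (2 / band_frac alpha)) with (alpha * (ln (2 / band_frac alpha) / alpha)) by (field; lra).
      apply Rmult_le_compat_l; lra. }
    apply exp_le in Hln; rewrite exp_ln in Hln by (apply Rdiv_lt_0_compat; lra).
    apply (Rmult_le_compat_r (band_frac alpha)) in Hln; [|lra].
    replace (2 / band_frac alpha * band_frac alpha) with 2 in Hln by (field; lra); exact Hln. }
  replace (nu * band_frac alpha / 32 * exp (INR i * ln 2 * (1 - 2 * alpha)))
    with (nu * exp ((INR i - 4) * ln 2) * (band_frac alpha / 2 * exp (a - alpha * R))).
  2:{ replace (exp ((INR i - 4) * ln 2)) with (exp (INR i * ln 2) / exp (4 * ln 2))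
        by (unfold Rdiv; rewrite <- exp_Ropp, <- exp_plus; f_equal; ring).
      rewrite exp_4ln2.
      replace (INR i * ln 2 * (1 - 2 * alpha)) with (INR i * ln 2 + (a - alpha * R)) by (unfold a; ring).
      rewrite (exp_plus (INR i * ln 2)); field. }
  apply Rmult_le_compat.
  - apply Rmult_le_pos; [lra | apply Rlt_le, exp_pos].
  - apply Rmult_le_pos; [lra | apply Rlt_le, exp_pos].
  - apply n_div_ntiles_ge; auto.
  - apply (cosh_band_ratio_ge a d (alpha * R) Hd Hat Hbig).
Qed.

(** * Asymptotics *)

Lemma exp_neg_exp_decay beta C eps : 0 < beta -> 0 < C -> 0 < eps ->
  exists R0, forall R, R0 <= R -> C * exp R * exp (- exp (beta * R)) <= eps.
Proof.
  intros Hb HC He; exists (Rmax (4 / beta ^ 2) (Rmax 0 (ln (C / eps)))); intros R HR.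
  assert (HR1 : 4 / beta ^ 2 <= R) by (eapply Rle_trans; [apply Rmax_l | exact HR]).
  assert (HR2 : ln (C / eps) <= R) by (eapply Rle_trans; [|exact HR]; eapply Rle_trans; [|apply Rmax_r]; apply Rmax_r).
  assert (HR0 : 0 <= R) by (eapply Rle_trans; [|exact HR]; eapply Rle_trans; [|apply Rmax_r]; apply Rmax_l).
  assert (H2R : 2 * R <= exp (beta * R)).
  { eapply Rle_trans; [|apply sqr_half_le_exp; nra].
    assert (4 <= beta ^ 2 * R).
    { apply (Rmult_le_compat_l (beta ^ 2)) in HR1; [|apply pow_le; lra].
      replace (beta ^ 2 * (4 / beta ^ 2)) with 4 in HR1 by (field; lra); exact HR1. }
    replace ((beta * R) ^ 2 / 2) with (beta ^ 2 * R * R / 2) by (simpl; field).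
    nra. }
  apply Rle_trans with (C * exp (- R)).
  - replace (exp (- R)) with (exp R * exp (- (2 * R))) by (rewrite <- exp_plus; f_equal; ring).
    rewrite Rmult_assoc; apply Rmult_le_compat_l; [lra|].
    apply Rmult_le_compat_l; [apply Rlt_le, exp_pos | apply exp_le; lra].
  - assert (HCe : C / eps <= exp R)
      by (rewrite <- (exp_ln (C / eps)) by (apply Rdiv_lt_0_compat; lra); apply exp_le, HR2).
    rewrite exp_Ropp; apply (Rmult_le_reg_r (exp R)); [apply exp_pos|].
    rewrite Rmult_assoc, Rinv_l by (pose proof (exp_pos R); lra).
    apply (Rmult_le_compat_l eps) in HCe; [|lra].
    replace (eps * (C / eps)) with C in HCe by (field; lra); lra.
Qed.

Lemma Rrad_eventually_ge nu R0 : 0 < nu ->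
  exists N, forall n, (N <= n)%nat -> nu < INR n -> R0 <= Rrad nu n.
Proof.
  intro Hnu; destruct (INR_archimed 1 (nu * exp (R0 / 2)) ltac:(lra)) as [N HN].
  exists N; intros n HnN Hn; apply le_INR in HnN; rewrite Rmult_1_r in HN.
  rewrite (INR_n_eq nu n Hnu Hn) in HnN.
  assert (Hexp : exp (R0 / 2) < exp (Rrad nu n / 2)) by (apply (Rmult_lt_reg_l nu); lra).
  apply exp_lt_inv in Hexp; lra.
Qed.

Lemma sqrt_INR_le nu n : 0 < nu -> nu < INR n -> sqrt (INR n) <= nu * exp (Rrad nu n / 2).
Proof.
  intros Hnu Hn; rewrite <- (INR_n_eq nu n Hnu Hn).
  assert (H1 : 1 <= INR n) by (destruct n; [simpl in Hn; lra | apply (le_INR 1); lia]).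
  destruct H1 as [H1 | <-]; [apply Rlt_le, sqrt_less; lra | rewrite sqrt_1; lra].
Qed.

Definition radius_threshold (alpha : R) : R :=
  Rmax (40 * ln 2) (10 * (ln (2 / band_frac alpha) / alpha + 2 * ln 2)).

Section LargeNu.

Variables (alpha nu : R) (n : nat).
Hypothesis Ha : 0 < alpha < 1 / 2.
Hypothesis Hnuc : 512 <= nu * band_frac alpha.
Hypothesis Hn : nu < INR n.
Hypothesis HR : radius_threshold alpha <= Rrad nu n.

Local Notation R := (Rrad nu n).
Local Notation mu := (tile_mean alpha nu n).
Local Notation im := (imax nu n).

Let Hnu : 0 < nu.
Proof. pose proof (band_frac_bounds alpha (proj1 Ha)); nra. Qed.

Let HR1 : 40 * ln 2 <= R.
Proof. eapply Rle_trans; [apply Rmax_l | exact HR]. Qed.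

Lemma tile_mean_row_ge i : (i <= im)%nat -> 16 * exp (INR i * ln 2 * (1 - 2 * alpha)) <= mu i.
Proof.
  intro Hi; eapply Rle_trans; [|apply tile_mean_ge; auto; eapply Rle_trans; [apply Rmax_r | exact HR]].
  apply Rmult_le_compat_r; [apply Rlt_le, exp_pos | lra].
Qed.

Lemma tile_mean_ge_16 i : (i <= im)%nat -> 16 <= mu i.
Proof.
  intro Hi; eapply Rle_trans; [|apply tile_mean_row_ge, Hi].
  assert (1 <= exp (INR i * ln 2 * (1 - 2 * alpha))).
  { rewrite <- exp_0 at 1; apply exp_le.
    pose proof ln2_pos; apply Rmult_le_pos; [apply Rmult_le_pos; [apply pos_INR|]|]; lra. }
  lra.
Qed.

(* [i_max ln 2 >= 9/20 R], so [2^(i_max (1 - 2 alpha)) >= exp (9/20 (1 - 2 alpha) R)]. *)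
Lemma top_tile_mean_ge : 2 * exp (9 / 20 * (1 - 2 * alpha) * R) <= mu im.
Proof.
  pose proof ln2_pos; pose proof (tile_mean_row_ge im (le_n _)).
  destruct (imax_bounds nu n Hnu Hn) as [Him _].
  assert (9 / 20 * R <= INR im * ln 2).
  { replace (9 / 20 * R) with (9 / 10 * R / (2 * ln 2) * ln 2) by (field; lra).
    apply Rmult_le_compat_r; lra. }
  assert (exp (9 / 20 * (1 - 2 * alpha) * R) <= exp (INR im * ln 2 * (1 - 2 * alpha)))
    by (apply exp_le; nra).
  pose proof (exp_pos (9 / 20 * (1 - 2 * alpha) * R)); lra.
Qed.

Lemma no_demand_failure_bounds : 0 <= 1 - prob_no_demand alpha nu n <=
  INR (ntiles nu n im) * (exp 7 * (2 * exp (- mu im / 2))).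
Proof.
  pose proof (prob_no_demand_ge alpha nu n tile_mean_ge_16 (imax_ge_1 nu n Hnu Hn HR1)
                (ntiles_double nu n Hnu Hn)).
  assert (prob_no_demand alpha nu n <= 1)
    by (apply prob_no_demand_le_1; intros i Hi; pose proof (tile_mean_ge_16 i Hi); lra).
  lra.
Qed.

Lemma no_demand_failure_sqrt_le : (1 - prob_no_demand alpha nu n) * sqrt (INR n) <=
  32 * exp 7 * nu * exp R * exp (- exp (9 / 20 * (1 - 2 * alpha) * R)).
Proof.
  destruct no_demand_failure_bounds as [Hfail0 Hfail].
  pose proof (ntiles_le_16 nu n Hnu Hn im (le_n _)) as Hnt.
  pose proof (sqrt_INR_le nu n Hnu Hn) as Hsqrt; pose proof (sqrt_pos (INR n)) as Hsqrt0.
  assert (Hdecay : exp (- mu im / 2) <= exp (- exp (9 / 20 * (1 - 2 * alpha) * R)))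
    by (apply exp_le; pose proof top_tile_mean_ge; lra).
  replace (32 * exp 7 * nu * exp R * exp (- exp (9 / 20 * (1 - 2 * alpha) * R)))
    with (16 * exp (R / 2) * (exp 7 * (2 * exp (- exp (9 / 20 * (1 - 2 * alpha) * R)))) * (nu * exp (R / 2)))
    by (replace (exp R) with (exp (R / 2) * exp (R / 2)) by (rewrite <- exp_plus; f_equal; field); ring).
  pose proof (exp_pos 7); pose proof (exp_pos (- mu im / 2)).
  apply Rmult_le_compat; [nra | exact Hsqrt0 | |exact Hsqrt].
  eapply Rle_trans; [exact Hfail|].
  apply Rmult_le_compat; [apply pos_INR | nra | exact Hnt | nra].
Qed.

End LargeNu.

Theorem mainTheorem13 (alpha : R) (Halpha : 0 < alpha < 1 / 2) :
  exists nu0 : R, 0 < nu0 /\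
    forall nu : R, nu0 <= nu ->
      forall eps : R, 0 < eps ->
        exists N : nat, forall n : nat, (N <= n)%nat -> nu < INR n ->
          Rabs (1 - prob_no_demand alpha nu n) <= eps / sqrt (INR n).
Proof.
  pose proof (band_frac_bounds alpha (proj1 Halpha)) as Hc.
  exists (512 / band_frac alpha); split; [apply Rdiv_lt_0_compat; lra|].
  intros nu Hnu eps Heps.
  assert (Hnuc : 512 <= nu * band_frac alpha).
  { apply (Rmult_le_compat_r (band_frac alpha)) in Hnu; [|lra].
    replace (512 / band_frac alpha * band_frac alpha) with 512 in Hnu by (field; lra); exact Hnu. }
  assert (Hnu0 : 0 < nu) by nra.
  destruct (exp_neg_exp_decay (9 / 20 * (1 - 2 * alpha)) (32 * exp 7 * nu) eps) as [R1 HR1];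
    [lra | pose proof (exp_pos 7); nra | exact Heps |].
  destruct (Rrad_eventually_ge nu (Rmax (radius_threshold alpha) R1) Hnu0) as [N HN].
  exists N; intros n HnN Hn; specialize (HN n HnN Hn).
  assert (HR : radius_threshold alpha <= Rrad nu n) by (eapply Rle_trans; [apply Rmax_l | exact HN]).
  pose proof (no_demand_failure_bounds alpha nu n Halpha Hnuc Hn HR) as [Hpos _].
  pose proof (no_demand_failure_sqrt_le alpha nu n Halpha Hnuc Hn HR) as Hbound.
  assert (Hsqrt : 0 < sqrt (INR n)) by (apply sqrt_lt_R0; lra).
  rewrite Rabs_right by lra.
  apply (Rmult_le_reg_r (sqrt (INR n))); [exact Hsqrt|].
  replace (eps / sqrt (INR n) * sqrt (INR n)) with eps by (field; lra).
  eapply Rle_trans; [exact Hbound | apply HR1; eapply Rle_trans; [apply Rmax_r | exact HN]].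
Qed.
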